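(* Let $\kappa$ be a cardinal. Let $(A_\alpha)_{\alpha\in\mathrm{Ord}}$ be cpo's and $f_{\alpha,\beta}\colon A_\alpha\to A_\beta$ ($\alpha\le\beta$) cpo maps with $f_{\beta,\gamma}\circ f_{\alpha,\beta}=f_{\alpha,\gamma}$ for all $\alpha\le\beta\le\gamma$ and $f_{\alpha,\alpha}=\mathrm{id}_{A_\alpha}$. Suppose that $A_0=\kappa\cdot 3$ is the coproduct in $\mathbf{CPO}$ of $\kappa$ copies of the chain $3$; that for every ordinal $\alpha$, $f_{\alpha,\alpha+1}\colon A_\alpha\to A_{\alpha+1}$ is a coequalizer in $\mathbf{CPO}$ of some pair of cpo maps $2\to A_\alpha$; and that for every limit ordinal $\alpha$, $A_\alpha=\operatorname{colim}_{\beta<\alpha}A_\beta$ in $\mathbf{CPO}$ with colimit injections $f_{\beta,\alpha}$. Then for every ordinal $\alpha$: (i) if $\kappa$ is infinite, $|A_\alpha|\le 2^\kappa$; (ii) if $\kappa$ is finite, $|A_\alpha|\le 2\kappa+1$.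
   Context: A cpo is a poset in which every chain, including the empty chain, has a join (so every cpo has a least element $0$). A cpo map is a map preserving joins of all chains. $\mathbf{CPO}$ is the category of cpo's and cpo maps; it is complete and cocomplete, and coproducts are disjoint unions with least elements identified. $2$ is the chain $0<1$ and $3$ is the chain $0<1<2$. *)

From Stdlib Require Import Classical Arith Lia.

Definition is_chain {T : Type} (le : T -> T -> Prop) (C : T -> Prop) : Prop :=
  forall x y, C x -> C y -> le x y \/ le y x.

Definition is_lub {T : Type} (le : T -> T -> Prop) (C : T -> Prop) (s : T) : Prop :=
  (forall x, C x -> le x s) /\ (forall u, (forall x, C x -> le x u) -> le s u).

(* A cpo: a poset in which every chain (including the empty chain) has a join. *)
Definition is_cpo {T : Type} (le : T -> T -> Prop) : Prop :=
  (forall x, le x x) /\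
  (forall x y z, le x y -> le y z -> le x z) /\
  (forall x y, le x y -> le y x -> x = y) /\
  (forall C, is_chain le C -> exists s, is_lub le C s).

Record cpo := Cpo {
  carrier :> Type;
  cle : carrier -> carrier -> Prop;
  cpo_ax : is_cpo cle
}.

Definition is_cpo_map {A B : cpo} (g : A -> B) : Prop :=
  forall (C : A -> Prop) (s : A), is_chain (cle A) C -> is_lub (cle A) C s ->
    is_lub (cle B) (fun y => exists x, C x /\ y = g x) (g s).

Definition nchain_le (n : nat) (x y : {i : nat | i <= n}) : Prop :=
  proj1_sig x <= proj1_sig y.

Lemma bounded_max (P : nat -> Prop) : forall k,
  (exists i, P i /\ i <= k) -> exists m, P m /\ m <= k /\ forall i, P i -> i <= k -> i <= m.
Proof.
  induction k as [|k IH]; intros [i [Pi Hi]].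
  - exists 0. assert (i = 0) by lia; subst. repeat split; auto; intros; lia.
  - destruct (classic (P (S k))) as [HS|HS].
    + exists (S k). repeat split; auto.
    + assert (Hik : i <= k) by (destruct (Nat.eq_dec i (S k)); [subst; contradiction|lia]).
      destruct (IH (ex_intro _ i (conj Pi Hik))) as [m [Pm [Hm Hmax]]].
      exists m. repeat split; auto; try lia.
      intros j Pj Hj. destruct (Nat.eq_dec j (S k)); [subst; contradiction|]. apply Hmax; auto; lia.
Qed.

Lemma nchain_is_cpo (n : nat) : is_cpo (nchain_le n).
Proof.
  unfold nchain_le; repeat split.
  - intros; lia.
  - intros; lia.
  - intros [x Hx] [y Hy] H1 H2; simpl in *. assert (x = y) by lia; subst.
    f_equal. apply Peano_dec.le_unique.
  - intros C _.
    destruct (classic (exists x, C x)) as [[x Cx]|Hne].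
    + destruct (bounded_max (fun i => exists p : i <= n, C (exist _ i p)) n)
        as [m [[pm Cm] [Hm Hmax]]].
      { destruct x as [x px]. exists x. split; [exists px; exact Cx|exact px]. }
      exists (exist _ m pm). split.
      * intros [y py] Cy; simpl. apply Hmax; [exists py; exact Cy|exact py].
      * intros u Hu. exact (Hu _ Cm).
    + exists (exist _ 0 (Nat.le_0_l n)). split.
      * intros x Cx; exfalso; apply Hne; eauto.
      * intros u _; simpl; lia.
Qed.

Definition nchain_cpo (n : nat) : cpo := Cpo {i : nat | i <= n} (nchain_le n) (nchain_is_cpo n).

(* 2 is the chain 0 < 1, 3 is the chain 0 < 1 < 2 *)
Definition two : cpo := nchain_cpo 1.
Definition three : cpo := nchain_cpo 2.

Definition is_coproduct {K : Type} (X : K -> cpo) (Z : cpo) (inj : forall k, X k -> Z) : Prop :=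
  (forall k, is_cpo_map (inj k)) /\
  forall (C : cpo) (g : forall k, X k -> C), (forall k, is_cpo_map (g k)) ->
    exists h : Z -> C, is_cpo_map h /\ (forall k x, h (inj k x) = g k x) /\
      (forall h' : Z -> C, is_cpo_map h' -> (forall k x, h' (inj k x) = g k x) ->
         forall z, h' z = h z).

Definition is_coequalizer {X Y Z : cpo} (u v : X -> Y) (q : Y -> Z) : Prop :=
  is_cpo_map q /\ (forall x, q (u x) = q (v x)) /\
  forall (C : cpo) (g : Y -> C), is_cpo_map g -> (forall x, g (u x) = g (v x)) ->
    exists h : Z -> C, is_cpo_map h /\ (forall y, h (q y) = g y) /\
      (forall h' : Z -> C, is_cpo_map h' -> (forall y, h' (q y) = g y) ->
         forall z, h' z = h z).

Definition well_order {I : Type} (lt : I -> I -> Prop) : Prop :=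
  (forall a b c, lt a b -> lt b c -> lt a c) /\
  (forall a b, lt a b \/ a = b \/ lt b a) /\
  well_founded lt.

Definition wle {I : Type} (lt : I -> I -> Prop) (a b : I) : Prop := lt a b \/ a = b.

Definition is_succ {I : Type} (lt : I -> I -> Prop) (a b : I) : Prop :=
  lt a b /\ forall c, lt a c -> wle lt b c.

Definition is_limit {I : Type} (lt : I -> I -> Prop) (a : I) : Prop :=
  (exists b, lt b a) /\ (forall b, lt b a -> exists c, lt b c /\ lt c a).

Definition is_colimit_below {I : Type} (lt : I -> I -> Prop) (A : I -> cpo)
    (f : forall a b, A a -> A b) (a : I) : Prop :=
  (forall b, lt b a -> is_cpo_map (f b a)) /\
  (forall b c, wle lt b c -> lt c a -> forall x, f c a (f b c x) = f b a x) /\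
  forall (C : cpo) (g : forall b, A b -> C),
    (forall b, lt b a -> is_cpo_map (g b)) ->
    (forall b c, wle lt b c -> lt c a -> forall x, g c (f b c x) = g b x) ->
    exists h : A a -> C, is_cpo_map h /\ (forall b, lt b a -> forall x, h (f b a x) = g b x) /\
      (forall h' : A a -> C, is_cpo_map h' ->
         (forall b, lt b a -> forall x, h' (f b a x) = g b x) -> forall y, h' y = h y).

Definition injective {X Y : Type} (e : X -> Y) : Prop := forall x y, e x = e y -> x = y.

Definition has_card (K : Type) (n : nat) : Prop :=
  exists e : K -> {m : nat | m < n}, injective e /\ forall y, exists x, e x = y.

Definition finite_type (K : Type) : Prop := exists n, has_card K n.

(* Every cpo A_a of the tower is generated, under joins of chains, by the
   images f_{0,a}(inj_k i) of the generators of A_0 = kappa . 3.  Indeed a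
   chain-closed subset containing the legs of a coproduct, of a coequalizer
   or of a colimit is a sub-cpo through which the universal property
   factors, so by uniqueness it is everything; transfinite induction along
   the tower then pushes the generators forward.
   In a cpo generated by a family whose values at 0 are the bottom, every
   element is the join of the generators below it, hence is determined by
   the set of pairs (b, k) with f_{0,a}(inj_k b) below it (b = 1, 2).  This
   gives |A_a| <= 2^(2 kappa) = 2^kappa for infinite kappa, using an
   injection 2 x kappa -> kappa extracted from a maximal binary splitting of
   kappa (Zorn's lemma, proved from the Bourbaki-Witt fixpoint theorem).
   For finite kappa the generators together with the bottom already form a
   finite chain-closed set, so A_a has at most 2 kappa + 1 elements. *)

From Stdlib Require Import Classical ClassicalEpsilon ProofIrrelevance
  FunctionalExtensionality PropExtensionality Arith Lia List.

Lemma sig_ext {T} (P : T -> Prop) (x y : {a | P a}) : proj1_sig x = proj1_sig y -> x = y.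
Proof. destruct x as [x px], y as [y py]; simpl; intros ->. f_equal; apply proof_irrelevance. Qed.

Lemma cle_refl (A : cpo) (x : A) : cle A x x.
Proof. exact (proj1 (cpo_ax A) x). Qed.

Lemma cle_trans (A : cpo) (x y z : A) : cle A x y -> cle A y z -> cle A x z.
Proof. exact (proj1 (proj2 (cpo_ax A)) x y z). Qed.

Lemma cle_antisym (A : cpo) (x y : A) : cle A x y -> cle A y x -> x = y.
Proof. exact (proj1 (proj2 (proj2 (cpo_ax A))) x y). Qed.

Lemma cpo_lub (A : cpo) (C : A -> Prop) : is_chain (cle A) C -> exists s, is_lub (cle A) C s.
Proof. exact (proj2 (proj2 (proj2 (cpo_ax A))) C). Qed.

Lemma lub_unique (A : cpo) C s t : is_lub (cle A) C s -> is_lub (cle A) C t -> s = t.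
Proof. intros [H1 H2] [H3 H4]. apply cle_antisym; [apply H2 | apply H4]; assumption. Qed.

Lemma is_lub_ext {T} (le : T -> T -> Prop) (C C' : T -> Prop) s :
  (forall x, C x <-> C' x) -> is_lub le C s -> is_lub le C' s.
Proof.
  intros E [H1 H2]; split.
  - intros x Cx; apply H1, E, Cx.
  - intros u Hu; apply H2; intros x Cx; apply Hu, E, Cx.
Qed.

Definition is_bottom (A : cpo) (b : A) : Prop := is_lub (cle A) (fun _ => False) b.

Lemma cpo_bottom (A : cpo) : {b : A | is_bottom A b}.
Proof. apply constructive_indefinite_description, cpo_lub. intros x y []. Qed.

(* Cpo maps are monotone: they preserve the join of the chain {x, y}. *)
Lemma cpo_map_mono (A B : cpo) (g : A -> B) :
  is_cpo_map g -> forall x y, cle A x y -> cle B (g x) (g y).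
Proof.
  intros Hg x y Hxy.
  assert (Hc : is_chain (cle A) (fun w => w = x \/ w = y)).
  { intros a b [->| ->] [->| ->]; auto using cle_refl. }
  assert (Hl : is_lub (cle A) (fun w => w = x \/ w = y) y).
  { split; [intros w [->| ->]; auto using cle_refl | intros u Hu; apply Hu; auto]. }
  apply (proj1 (Hg _ _ Hc Hl)). exists x; auto.
Qed.

Lemma img_chain (A B : cpo) (g : A -> B) (C : A -> Prop) : is_cpo_map g -> is_chain (cle A) C ->
  is_chain (cle B) (fun y => exists x, C x /\ y = g x).
Proof.
  intros Hg Hc y1 y2 [x1 [C1 ->]] [x2 [C2 ->]].
  destruct (Hc x1 x2 C1 C2); [left|right]; eapply cpo_map_mono; eauto.
Qed.

Lemma cpo_map_comp (A B D : cpo) (g : A -> B) (h : B -> D) :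
  is_cpo_map g -> is_cpo_map h -> is_cpo_map (fun x => h (g x)).
Proof.
  intros Hg Hh C s Hc Hl.
  eapply is_lub_ext; [|exact (Hh _ _ (img_chain A B g C Hg Hc) (Hg C s Hc Hl))].
  intro y; split.
  - intros [b [[a [Ca ->]] ->]]; eauto.
  - intros [a [Ca ->]]; eauto.
Qed.

Lemma cpo_map_id (A : cpo) : is_cpo_map (fun x : A => x).
Proof.
  intros C s Hc Hl. eapply is_lub_ext; [|exact Hl]. intro y; split.
  - intros Cy; eauto.
  - intros [x [Cx ->]]; auto.
Qed.

(* Cpo maps preserve the bottom, being the join of the empty chain. *)
Lemma cpo_map_bottom (A B : cpo) (g : A -> B) (b : A) :
  is_cpo_map g -> is_bottom A b -> is_bottom B (g b).
Proof.
  intros Hg Hb. eapply is_lub_ext; [|exact (Hg _ _ (fun x y (H : False) => match H with end) Hb)].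
  intro y; split; [intros [x [[] _]] | intros []].
Qed.

(** * Chain-closed subsets and sub-cpo's *)

Definition chain_closed (A : cpo) (P : A -> Prop) : Prop :=
  forall C s, is_chain (cle A) C -> is_lub (cle A) C s -> (forall c, C c -> P c) -> P s.

Lemma chain_closed_pre (A B : cpo) (g : A -> B) (P : B -> Prop) :
  is_cpo_map g -> chain_closed B P -> chain_closed A (fun x => P (g x)).
Proof.
  intros Hg HP C s Hc Hl HC.
  apply (HP _ _ (img_chain A B g C Hg Hc) (Hg C s Hc Hl)).
  intros y [x [Cx ->]]; auto.
Qed.

Section SubCpo.
Variables (A : cpo) (P : A -> Prop).
Hypothesis HP : chain_closed A P.

Definition sub_le (x y : {a : A | P a}) : Prop := cle A (proj1_sig x) (proj1_sig y).

Lemma sub_lub_of (C : {a | P a} -> Prop) (s : {a | P a}) :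
  is_lub (cle A) (fun y => exists x, C x /\ y = proj1_sig x) (proj1_sig s) -> is_lub sub_le C s.
Proof.
  intros [H1 H2]; split.
  - intros x Cx; apply H1; eauto.
  - intros u Hu; apply H2. intros y [x [Cx ->]]. apply Hu; auto.
Qed.

Lemma sub_chain_img C : is_chain sub_le C -> is_chain (cle A) (fun y => exists x, C x /\ y = proj1_sig x).
Proof. intros Hc y1 y2 [x1 [C1 ->]] [x2 [C2 ->]]. apply Hc; auto. Qed.

Lemma sub_chain_lub C : is_chain sub_le C ->
  exists s : {a | P a}, is_lub (cle A) (fun y => exists x, C x /\ y = proj1_sig x) (proj1_sig s).
Proof.
  intro Hc. destruct (cpo_lub A _ (sub_chain_img C Hc)) as [t Ht].
  assert (Pt : P t) by (apply (HP _ t (sub_chain_img C Hc) Ht); intros c [x [_ ->]]; exact (proj2_sig x)).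
  exists (exist _ t Pt); exact Ht.
Qed.

Lemma sub_is_cpo : is_cpo sub_le.
Proof.
  split; [|split; [|split]].
  - intros; apply cle_refl.
  - intros x y z; apply cle_trans.
  - intros x y H1 H2. apply sig_ext, cle_antisym; auto.
  - intros C Hc. destruct (sub_chain_lub C Hc) as [s Hs]. exists s. apply sub_lub_of, Hs.
Qed.

Definition subcpo : cpo := Cpo {a : A | P a} sub_le sub_is_cpo.

Lemma incl_cpo_map : @is_cpo_map subcpo A (@proj1_sig _ _).
Proof.
  intros C s Hc Hl. destruct (sub_chain_lub C Hc) as [t Ht].
  replace s with t by (eapply (lub_unique subcpo); [apply sub_lub_of, Ht | exact Hl]).
  exact Ht.
Qed.

Lemma corestr_cpo_map (B : cpo) (g : B -> A) (Hg : is_cpo_map g) (H : forall y, P (g y)) :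
  @is_cpo_map B subcpo (fun y => exist _ (g y) (H y)).
Proof.
  intros C s Hc Hl. apply sub_lub_of. simpl.
  eapply is_lub_ext; [|exact (Hg C s Hc Hl)]. intro y; split.
  - intros [x [Cx ->]]. exists (exist _ (g x) (H x)). split; auto. eauto.
  - intros [x [[b [Cb ->]] ->]]; simpl; eauto.
Qed.

(* If a cpo map into the sub-cpo is a section of the inclusion, P is everything.
   This is how uniqueness in universal properties is turned into generation. *)
Lemma sub_section_full (h : A -> subcpo) :
  (forall y, proj1_sig (h y) = y) -> forall y, P y.
Proof. intros Hh y. rewrite <- Hh. exact (proj2_sig (h y)). Qed.
End SubCpo.

(** * Chain closures and generation *)

Definition in_closure (A : cpo) (G : A -> Prop) (y : A) : Prop :=
  forall P, chain_closed A P -> (forall x, G x -> P x) -> P y.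

Definition generates (A : cpo) (G : A -> Prop) : Prop := forall y, in_closure A G y.

Lemma in_closure_base (A : cpo) (G : A -> Prop) y : G y -> in_closure A G y.
Proof. intros Gy P _ HG; auto. Qed.

Lemma in_closure_trans (A : cpo) (G G' : A -> Prop) y :
  (forall x, G x -> in_closure A G' x) -> in_closure A G y -> in_closure A G' y.
Proof. intros HGG' Hy P HP HG'. apply Hy; auto. intros x Gx; apply HGG'; auto. Qed.

Lemma in_closure_image (X Y : cpo) (g : X -> Y) (G : X -> Prop) x :
  is_cpo_map g -> in_closure X G x -> in_closure Y (fun y => exists x', G x' /\ y = g x') (g x).
Proof.
  intros Hg Hx P HP HG. apply (Hx (fun x => P (g x))).
  - apply chain_closed_pre; auto.
  - intros x' Gx'; apply HG; eauto.
Qed.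

Lemma coproduct_generates {K : Type} (X : K -> cpo) (Z : cpo) (inj : forall k, X k -> Z) :
  is_coproduct X Z inj -> generates Z (fun y => exists k x, y = inj k x).
Proof.
  intros [Hinj Huniv] y P HP HG.
  pose (legs := fun k x => exist P (inj k x) (HG _ (ex_intro _ k (ex_intro _ x eq_refl)))).
  destruct (Huniv (subcpo Z P HP) legs) as [h [Hh [Hh_inj _]]].
  { intro k; apply corestr_cpo_map, Hinj. }
  destruct (Huniv Z inj Hinj) as [h0 [_ [_ Huniq]]].
  apply (sub_section_full Z P HP h). intro w.
  transitivity (h0 w); [|symmetry; exact (Huniq (fun x => x) (cpo_map_id Z) (fun _ _ => eq_refl) w)].
  apply (Huniq (fun x => proj1_sig (h x))).
  - apply cpo_map_comp; [exact Hh | apply incl_cpo_map].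
  - intros k x. rewrite Hh_inj. reflexivity.
Qed.

Lemma coequalizer_generates {X Y Z : cpo} (u v : X -> Y) (q : Y -> Z) :
  is_coequalizer u v q -> generates Z (fun y => exists x, y = q x).
Proof.
  intros [Hq [Hquv Huniv]] y P HP HG.
  pose (leg := fun x => exist P (q x) (HG _ (ex_intro _ x eq_refl))).
  destruct (Huniv (subcpo Z P HP) leg) as [h [Hh [Hh_q _]]].
  { apply corestr_cpo_map, Hq. }
  { intro x. apply sig_ext, Hquv. }
  destruct (Huniv Z q Hq Hquv) as [h0 [_ [_ Huniq]]].
  apply (sub_section_full Z P HP h). intro w.
  transitivity (h0 w); [|symmetry; exact (Huniq (fun x => x) (cpo_map_id Z) (fun _ => eq_refl) w)].
  apply (Huniq (fun x => proj1_sig (h x))).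
  - apply cpo_map_comp; [exact Hh | apply incl_cpo_map].
  - intro x. rewrite Hh_q. reflexivity.
Qed.

Lemma colimit_generates {I : Type} (lt : I -> I -> Prop) (A : I -> cpo)
    (f : forall a b, A a -> A b) (a : I) :
  (forall b c d, lt b c -> lt c d -> lt b d) -> is_colimit_below lt A f a ->
  generates (A a) (fun y => exists b x, lt b a /\ y = f b a x).
Proof.
  intros Htr [Hmaps [Hcomp Huniv]] y P HP HG.
  assert (Hleg : forall b, lt b a -> forall x, P (f b a x)) by (intros b Hb x; apply HG; eauto).
  destruct (cpo_bottom (A a)) as [bot Hbot].
  assert (Pbot : P bot) by (apply (HP (fun _ => False)); [intros x x' [] | exact Hbot | intros c []]).
  (* legs into the sub-cpo; outside the diagram (b not below a) they are irrelevant *)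
  pose (legs := fun b (x : A b) => match excluded_middle_informative (lt b a) with
                 | left H => exist P (f b a x) (Hleg b H x)
                 | right _ => exist P bot Pbot end).
  assert (Hlegs : forall b, lt b a -> forall x, proj1_sig (legs b x) = f b a x).
  { intros b Hb x. unfold legs. destruct (excluded_middle_informative (lt b a)); [reflexivity | contradiction]. }
  destruct (Huniv (subcpo (A a) P HP) legs) as [h [Hh [Hh_f _]]].
  { intros b Hb. unfold legs. destruct (excluded_middle_informative (lt b a)) as [H|]; [|contradiction].
    apply corestr_cpo_map, Hmaps, Hb. }
  { intros b c Hbc Hca x. apply sig_ext.
    assert (Hba : lt b a) by (destruct Hbc as [Hbc| ->]; eauto).
    rewrite !Hlegs by auto. apply Hcomp; auto. }
  destruct (Huniv (A a) (fun b x => f b a x) Hmaps Hcomp) as [h0 [_ [_ Huniq]]].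
  apply (sub_section_full (A a) P HP h). intro w.
  transitivity (h0 w); [|symmetry; exact (Huniq (fun x => x) (cpo_map_id _) (fun _ _ _ => eq_refl) w)].
  apply (Huniq (fun x => proj1_sig (h x))).
  - apply cpo_map_comp; [exact Hh | apply incl_cpo_map].
  - intros b Hb x. rewrite Hh_f by exact Hb. apply Hlegs, Hb.
Qed.

(** * Generation along the tower *)

Lemma least_element {I : Type} (lt : I -> I -> Prop) :
  well_order lt -> forall a : I, exists z, forall c, wle lt z c.
Proof.
  intros [_ [Htri Hwf]] a.
  assert (Hmin : exists z, forall b, ~ lt b z).
  { induction a as [a IH] using (well_founded_induction Hwf).
    destruct (classic (exists b, lt b a)) as [[b Hb]|Hn]; [exact (IH b Hb)|].
    exists a; intros b Hb; eauto. }
  destruct Hmin as [z Hz]. exists z. intro c.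
  destruct (Htri z c) as [H|[H|H]]; [left; auto | right; auto | exfalso; eapply Hz; eauto].
Qed.

Lemma succ_or_limit {I : Type} (lt : I -> I -> Prop) :
  well_order lt -> forall a, (exists b, lt b a) -> is_limit lt a \/ exists b, is_succ lt b a.
Proof.
  intros [Htr [Htri _]] a Hpred.
  destruct (classic (is_limit lt a)) as [Hl|Hnl]; [left; exact Hl | right].
  apply NNPP; intro Hns. apply Hnl. split; [exact Hpred|].
  intros b Hb. apply NNPP; intro Hgap. apply Hns. exists b. split; [exact Hb|].
  intros c Hbc. destruct (Htri a c) as [H|[H|H]]; [left; auto | right; auto | exfalso; eauto].
Qed.

Section Tower.
Variables (K I : Type) (lt : I -> I -> Prop) (A : I -> cpo) (f : forall a b, A a -> A b).
Hypothesis Hwo : well_order lt.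
Hypothesis Hf_map : forall a b, wle lt a b -> is_cpo_map (f a b).
Hypothesis Hf_comp : forall a b c, wle lt a b -> wle lt b c -> forall x, f b c (f a b x) = f a c x.
Hypothesis Hf_id : forall a x, f a a x = x.
Hypothesis Hsucc : forall a b, is_succ lt a b ->
  exists u v : two -> A a, is_cpo_map u /\ is_cpo_map v /\ is_coequalizer u v (f a b).
Hypothesis Hlim : forall a, is_limit lt a -> is_colimit_below lt A f a.
Variables (z : I) (inj : K -> three -> A z).
Hypothesis Hz : forall a, wle lt z a.
Hypothesis Hinj : is_coproduct (fun _ : K => three) (A z) inj.

Definition tower_gen (a : I) (y : A a) : Prop := exists k i, y = f z a (inj k i).

Lemma tower_push (b a : I) : wle lt b a -> generates (A b) (tower_gen b) ->
  forall x, in_closure (A a) (tower_gen a) (f b a x).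
Proof.
  intros Hba Hgen x.
  apply (in_closure_trans _ (fun y => exists x', tower_gen b x' /\ y = f b a x')).
  - intros y [x' [[k [i ->]] ->]]. apply in_closure_base. exists k, i. apply Hf_comp; auto.
  - apply in_closure_image; auto.
Qed.

Lemma tower_generated (a : I) : generates (A a) (tower_gen a).
Proof.
  pose proof Hwo as [Htr [_ Hwf]].
  induction a as [a IH] using (well_founded_induction Hwf).
  intro y. destruct (classic (exists b, lt b a)) as [Hpred|Hnone].
  - destruct (succ_or_limit lt Hwo a Hpred) as [Hl|[b Hb]].
    + refine (in_closure_trans _ _ _ _ _ (colimit_generates lt A f a Htr (Hlim a Hl) y)).
      intros w [b [x [Hba ->]]]. apply tower_push; [left | apply IH]; exact Hba.
    + destruct (Hsucc b a Hb) as [u [v [_ [_ Hq]]]].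
      refine (in_closure_trans _ _ _ _ _ (coequalizer_generates u v _ Hq y)).
      intros w [x ->]. apply tower_push; [left | apply IH]; apply Hb.
  - destruct (Hz a) as [Hza| <-]; [exfalso; eauto|].
    refine (in_closure_trans _ _ _ _ _ (coproduct_generates _ _ _ Hinj y)).
    intros w [k [x ->]]. apply in_closure_base. exists k, x. symmetry; apply Hf_id.
Qed.
End Tower.

(** * Counting the elements of a cpo generated by levels *)

Definition zero3 : three := exist (fun i => i <= 2) 0 (le_0_n 2).
Definition one3 : three := exist (fun i => i <= 2) 1 (le_S _ _ (le_n 1)).
Definition two3 : three := exist (fun i => i <= 2) 2 (le_n 2).

Definition level (b : bool) : three := if b then one3 else two3.

Lemma three_cases (i : three) : i = zero3 \/ exists b, i = level b.
Proof.
  destruct i as [n p].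
  assert (n = 0 \/ n = 1 \/ n = 2) as [->|[->| ->]] by lia.
  - left; apply sig_ext; auto.
  - right; exists true; apply sig_ext; auto.
  - right; exists false; apply sig_ext; auto.
Qed.

Lemma zero3_bottom : is_bottom three zero3.
Proof. split; [intros _ []|]. intros u _. simpl. unfold nchain_le. simpl. lia. Qed.

Lemma chain_list_max {T} (le : T -> T -> Prop) (Hrefl : forall x, le x x)
  (Htr : forall x y z, le x y -> le y z -> le x z) (l : list T) :
  forall C, is_chain le C -> (forall c, C c -> In c l) ->
  (exists m, C m /\ forall c, C c -> le c m) \/ (forall c, ~ C c).
Proof.
  induction l as [|x l IH]; intros C Hch Hin.
  - right; intros c Cc; exact (Hin c Cc).
  - pose (C' := fun c => C c /\ c <> x).
    assert (Hch' : is_chain le C') by (intros a b [Ca _] [Cb _]; apply Hch; auto).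
    assert (Hin' : forall c, C' c -> In c l).
    { intros c [Cc Hne]. destruct (Hin c Cc) as [->|H]; [contradiction|auto]. }
    assert (Hsplit : forall c, C c -> c = x \/ C' c).
    { intros c Cc. destruct (classic (c = x)); [left|right; split]; auto. }
    destruct (IH C' Hch' Hin') as [[m [[Cm _] Hm]]|Hemp];
      destruct (classic (C x)) as [Cx|Cx].
    + left. destruct (Hch x m Cx Cm) as [L|L].
      * exists m; split; auto. intros c Cc. destruct (Hsplit c Cc) as [->|H]; auto.
      * exists x; split; auto. intros c Cc. destruct (Hsplit c Cc) as [->|H]; eauto.
    + left. exists m; split; auto. intros c Cc. destruct (Hsplit c Cc) as [->|H]; [contradiction|auto].
    + left. exists x; split; auto. intros c Cc. destruct (Hsplit c Cc) as [->|H]; [auto|].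
      exfalso; exact (Hemp c H).
    + right. intros c Cc. destruct (Hsplit c Cc) as [->|H]; [contradiction|exact (Hemp c H)].
Qed.

Lemma finite_closure (A : cpo) (G : A -> Prop) (l : list A) :
  (forall x, G x -> In x l) -> generates A G -> forall y, In y l \/ is_bottom A y.
Proof.
  intros Hl Hgen y. destruct (cpo_bottom A) as [bot Hbot].
  assert (Hbot_eq : forall x, is_bottom A x -> x = bot) by (intros x Hx; apply (lub_unique A _ _ _ Hx Hbot)).
  apply (Hgen y); [|intros x Gx; left; auto].
  intros C s Hch Hs HC.
  assert (HCl : forall c, C c -> In c (bot :: l)).
  { intros c Cc. destruct (HC c Cc) as [H|H]; [right; exact H | left; symmetry; apply Hbot_eq, H]. }
  destruct (chain_list_max (cle A) (cle_refl A) (cle_trans A) _ C Hch HCl) as [[m [Cm Hm]]|Hemp].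
  - replace s with m; [exact (HC m Cm)|].
    apply (lub_unique A C); [|exact Hs]. split; [exact Hm | intros u Hu; apply Hu, Cm].
  - right. eapply is_lub_ext; [|exact Hs]. intro x; split; [intro Cx; exact (Hemp x Cx) | intros []].
Qed.

Section GeneratedByLevels.
Variables (K : Type) (B : cpo) (g : K -> three -> B).
Hypothesis g_bottom : forall k, is_bottom B (g k zero3).
Hypothesis g_generates : generates B (fun y => exists k i, y = g k i).

(* Every element is the join of the generators below it: the elements with
   this property form a chain-closed set containing the generators. *)
Lemma join_of_generators_below (y : B) :
  is_lub (cle B) (fun w => (exists k i, w = g k i) /\ cle B w y) y.
Proof.
  apply (g_generates y).
  - intros C s Hch Hl HC. split; [intros w [_ H]; exact H|].
    intros u Hu. apply (proj2 Hl). intros c Cc. apply (proj2 (HC c Cc)).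
    intros w [Gw Hw]. apply Hu. split; auto. eapply cle_trans; [exact Hw | apply (proj1 Hl); auto].
  - intros x Gx. split; [intros w [_ H]; exact H|].
    intros u Hu. apply Hu. split; [exact Gx | apply cle_refl].
Qed.

Lemma determined_by_generators (y y' : B) :
  (forall k b, cle B (g k (level b)) y <-> cle B (g k (level b)) y') -> y = y'.
Proof.
  intros H. apply (lub_unique B (fun w => (exists k i, w = g k i) /\ cle B w y));
    [apply join_of_generators_below|].
  eapply is_lub_ext; [|apply join_of_generators_below].
  intros w; split; intros [[k [i ->]] Hw]; (split; [exists k, i; reflexivity|]);
    (destruct (three_cases i) as [->|[b ->]]; [apply (proj2 (g_bottom k)); intros _ [] | apply H; exact Hw]).
Qed.

Lemma generated_to_power : exists e : B -> (bool * K -> bool), injective e.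
Proof.
  exists (fun y p => if excluded_middle_informative (cle B (g (snd p) (level (fst p))) y) then true else false).
  intros y y' E. apply determined_by_generators. intros k b.
  pose proof (f_equal (fun F => F (b, k)) E) as Ebk. simpl in Ebk.
  destruct (excluded_middle_informative (cle B (g k (level b)) y));
  destruct (excluded_middle_informative (cle B (g k (level b)) y')); try discriminate; tauto.
Qed.

Lemma generated_enumeration : (exists l : list K, forall k, In k l) ->
  exists s : option (bool * K) -> B, forall y, exists t, s t = y.
Proof.
  intros [lK HlK]. destruct (cpo_bottom B) as [bot Hbot].
  exists (fun t => match t with None => bot | Some (b, k) => g k (level b) end).
  intro y.
  destruct (finite_closure B (fun y => exists k i, y = g k i)
              (map (fun p => g (fst p) (snd p)) (list_prod lK (zero3 :: one3 :: two3 :: nil))))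
    with (y := y) as [Hy|Hy]; [| exact g_generates | |].
  - intros x [k [i ->]]. apply in_map_iff. exists (k, i). split; [reflexivity|].
    apply in_prod_iff. split; [apply HlK|].
    destruct (three_cases i) as [->|[[|] ->]]; simpl; auto.
  - apply in_map_iff in Hy. destruct Hy as [[k i] [<- _]]. simpl.
    destruct (three_cases i) as [->|[b ->]].
    + exists None. apply (lub_unique B _ _ _ Hbot (g_bottom k)).
    + exists (Some (b, k)). reflexivity.
  - exists None. apply (lub_unique B _ _ _ Hbot Hy).
Qed.
End GeneratedByLevels.

(** * Zorn's lemma for cpo's, via the Bourbaki-Witt fixpoint theorem *)

(* An inflationary map g on a cpo has a fixpoint: the least subset closed
   under g and joins of chains is a chain, and its join is fixed. *)
Section BourbakiWitt.
Variables (T : Type) (le : T -> T -> Prop) (g : T -> T).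
Hypothesis Hcpo : is_cpo le.
Hypothesis Hinfl : forall x, le x (g x).

Let refl := proj1 Hcpo.
Let trans := proj1 (proj2 Hcpo).
Let anti := proj1 (proj2 (proj2 Hcpo)).
Let lubs := proj2 (proj2 (proj2 Hcpo)).

Definition bw_closed (S : T -> Prop) : Prop :=
  (forall x, S x -> S (g x)) /\
  (forall C s, is_chain le C -> is_lub le C s -> (forall c, C c -> S c) -> S s).

Definition bw_set (x : T) : Prop := forall S, bw_closed S -> S x.

Lemma bw_set_closed : bw_closed bw_set.
Proof.
  split.
  - intros x Mx S HS. apply (proj1 HS), Mx, HS.
  - intros C s Hch Hl HC S HS. apply (proj2 HS C s Hch Hl). intros c Cc; apply HC; auto.
Qed.

Lemma bw_set_ind (S : T -> Prop) : bw_closed (fun x => bw_set x /\ S x) -> forall x, bw_set x -> S x.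
Proof. intros H x Mx. apply (Mx _ H). Qed.

Definition extreme (c : T) : Prop := bw_set c /\ forall x, bw_set x -> le x c -> x <> c -> le (g x) c.

Lemma extreme_compare (c : T) : extreme c -> forall x, bw_set x -> le x c \/ le (g c) x.
Proof.
  intros [Mc Ec]. apply bw_set_ind. split.
  - intros x [Mx Hx]. split; [apply bw_set_closed; auto|].
    destruct Hx as [Hx|Hx].
    + destruct (classic (x = c)) as [->|Hne]; [right; apply refl | left; apply Ec; auto].
    + right. eapply trans; eauto.
  - intros C s Hch Hl HC. split; [apply (proj2 bw_set_closed C s Hch Hl); intros; apply HC; auto|].
    destruct (classic (exists c', C c' /\ le (g c) c')) as [[c' [Cc' Hc']]|Hn].
    + right. eapply trans; [exact Hc' | apply (proj1 Hl); auto].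
    + left. apply (proj2 Hl). intros x Cx. destruct (proj2 (HC x Cx)) as [H|H]; auto.
      exfalso; eauto.
Qed.

Lemma bw_extreme : forall c, bw_set c -> extreme c.
Proof.
  apply bw_set_ind. split.
  - intros c [Mc Ec]. split; [apply bw_set_closed; auto|]. split; [apply bw_set_closed; auto|].
    intros x Mx Hxg Hne. destruct (extreme_compare c Ec x Mx) as [H|H].
    + destruct (classic (x = c)) as [->|Hne2]; [apply refl|].
      eapply trans; [apply (proj2 Ec); auto | apply Hinfl].
    + exfalso; apply Hne; apply anti; auto.
  - intros C s Hch Hl HC.
    assert (Ms : bw_set s) by (apply (proj2 bw_set_closed C s Hch Hl); intros; apply HC; auto).
    split; auto. split; auto.
    intros x Mx Hxs Hne.
    destruct (classic (exists c, C c /\ ~ le c x)) as [[c [Cc Hcx]]|Hn].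
    + destruct (HC c Cc) as [_ Ec].
      destruct (extreme_compare c Ec x Mx) as [H|H].
      * assert (x <> c) by (intros ->; apply Hcx, refl).
        eapply trans; [apply (proj2 Ec); auto | apply (proj1 Hl); auto].
      * exfalso. apply Hcx. eapply trans; [apply Hinfl | exact H].
    + exfalso. apply Hne. apply anti; auto. apply (proj2 Hl). intros c Cc.
      apply NNPP; intro; apply Hn; eauto.
Qed.

(* The join of the chain bw_set lies in bw_set, so it is fixed by g. *)
Lemma bourbaki_witt : exists x, g x = x.
Proof.
  assert (Hch : is_chain le bw_set).
  { intros x y Mx My. destruct (extreme_compare y (bw_extreme y My) x Mx) as [H|H]; auto.
    right. eapply trans; [apply Hinfl | exact H]. }
  destruct (lubs _ Hch) as [m Hm].
  assert (Mm : bw_set m) by (apply (proj2 bw_set_closed _ m Hch Hm); auto).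
  exists m. apply anti; [apply (proj1 Hm); apply bw_set_closed; auto | apply Hinfl].
Qed.
End BourbakiWitt.

(* Zorn's lemma: a cpo has a maximal element (apply Bourbaki-Witt to a map
   choosing a strictly larger element whenever there is one). *)
Lemma cpo_has_maximal {T : Type} (le : T -> T -> Prop) :
  is_cpo le -> exists m, forall x, le m x -> x = m.
Proof.
  intro Hc.
  pose (step := fun m => match excluded_middle_informative (exists x, le m x /\ x <> m) with
                | left H => proj1_sig (constructive_indefinite_description _ H)
                | right _ => m end).
  assert (Hstep : forall m, le m (step m)).
  { intro m. unfold step. destruct (excluded_middle_informative _) as [H|H].
    - exact (proj1 (proj2_sig (constructive_indefinite_description _ H))).
    - apply (proj1 Hc). }
  destruct (bourbaki_witt T le step Hc Hstep) as [m Hm].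
  exists m. intros x Hx. apply NNPP; intro Hne.
  unfold step in Hm. destruct (excluded_middle_informative _) as [H|H].
  - exact (proj2 (proj2_sig (constructive_indefinite_description _ H)) Hm).
  - apply H; eauto.
Qed.

(** * Infinite sets absorb doubling *)

Lemma list_cover_finite (T : Type) (l : list T) : (forall x, In x l) -> finite_type T.
Proof.
  intros Hl.
  pose (l' := nodup (fun x y : T => excluded_middle_informative (x = y)) l).
  assert (Hnd : NoDup l') by apply NoDup_nodup.
  assert (Hin : forall x, In x l') by (intro x; apply nodup_In; auto).
  assert (Hidx : forall x, {n | nth_error l' n = Some x}).
  { intro x. apply constructive_indefinite_description, In_nth_error, Hin. }
  assert (Hlt : forall x, proj1_sig (Hidx x) < length l').
  { intro x. apply nth_error_Some. rewrite (proj2_sig (Hidx x)). discriminate. }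
  exists (length l'), (fun x => exist _ (proj1_sig (Hidx x)) (Hlt x)). split.
  - intros x y E. apply (f_equal (@proj1_sig _ _)) in E. simpl in E.
    pose proof (proj2_sig (Hidx x)) as Ex. pose proof (proj2_sig (Hidx y)) as Ey. simpl in *.
    rewrite E in Ex. rewrite Ex in Ey. injection Ey; auto.
  - intros [m Hm]. assert (Hs : nth_error l' m <> None) by (apply nth_error_Some; auto).
    destruct (nth_error l' m) as [x|] eqn:Ex; [|congruence].
    exists x. apply sig_ext. simpl.
    apply (proj1 (NoDup_nth_error l') Hnd); [apply Hlt|].
    rewrite (proj2_sig (Hidx x)). auto.
Qed.

Fixpoint iter_list {T} (next : list T -> T) (n : nat) : list T :=
  match n with 0 => nil | S n => next (iter_list next n) :: iter_list next n end.

Lemma iter_list_in {T} (next : list T -> T) : forall n m, m < n -> In (next (iter_list next m)) (iter_list next n).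
Proof.
  induction n; intros m Hm; [lia|]. simpl.
  destruct (Nat.eq_dec m n) as [->|Hne]; [left; auto | right; apply IHn; lia].
Qed.

(* A subset not covered by any finite list contains a copy of nat: keep
   choosing an element outside the finitely many chosen so far. *)
Lemma nat_embedding (T : Type) (D : T -> Prop) :
  (forall l : list T, exists x, D x /\ ~ In x l) -> exists i : nat -> T, injective i /\ forall n, D (i n).
Proof.
  intros H.
  pose (next := fun l => proj1_sig (constructive_indefinite_description _ (H l))).
  assert (Hnext : forall l, D (next l) /\ ~ In (next l) l)
    by (intro l; exact (proj2_sig (constructive_indefinite_description _ (H l)))).
  exists (fun n => next (iter_list next n)). split.
  - intros m n E. destruct (Nat.lt_total m n) as [h|[h|h]]; auto; exfalso.
    + apply (proj2 (Hnext (iter_list next n))). rewrite <- E. apply iter_list_in; auto.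
    + apply (proj2 (Hnext (iter_list next m))). rewrite E. apply iter_list_in; auto.
  - intro n; apply Hnext.
Qed.

(* Binary splittings of K: [R b x y] says that y is the b-th child of x. *)
Section Splitting.
Variable K : Type.

Definition has_children (R : bool -> K -> K -> Prop) (x : K) : Prop := forall b, exists y, R b x y.

Definition splitting (R : bool -> K -> K -> Prop) : Prop :=
  (forall b x y y', R b x y -> R b x y' -> y = y') /\
  (forall b x b' x' y, R b x y -> R b' x' y -> b = b' /\ x = x') /\
  (forall b x y, R b x y -> has_children R x) /\
  (forall b x y, R b x y -> has_children R y).

Definition Splitting : Type := {R | splitting R}.

Definition sub_splitting (R R' : Splitting) : Prop :=
  forall b x y, proj1_sig R b x y -> proj1_sig R' b x y.

(* Splittings ordered by inclusion form a cpo: the join of a chain is its union. *)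
Lemma splitting_cpo : is_cpo sub_splitting.
Proof.
  unfold sub_splitting; split; [|split; [|split]].
  - auto.
  - auto.
  - intros [R HR] [R' HR'] H1 H2; apply sig_ext; simpl in *.
    apply functional_extensionality; intro b; apply functional_extensionality; intro x;
    apply functional_extensionality; intro y; apply propositional_extensionality; split; auto.
  - intros C Hch.
    pose (U := fun b x y => exists R, C R /\ proj1_sig R b x y).
    assert (HU : splitting U).
    { split; [|split; [|split]].
      - intros b x y y' [R1 [C1 H1]] [R2 [C2 H2]].
        destruct (Hch R1 R2 C1 C2) as [L|L].
        + apply L in H1. exact (proj1 (proj2_sig R2) _ _ _ _ H1 H2).
        + apply L in H2. exact (proj1 (proj2_sig R1) _ _ _ _ H1 H2).
      - intros b x b' x' y [R1 [C1 H1]] [R2 [C2 H2]].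
        destruct (Hch R1 R2 C1 C2) as [L|L].
        + apply L in H1. exact (proj1 (proj2 (proj2_sig R2)) _ _ _ _ _ H1 H2).
        + apply L in H2. exact (proj1 (proj2 (proj2_sig R1)) _ _ _ _ _ H1 H2).
      - intros b x y [R1 [C1 H1]] b'.
        destruct (proj1 (proj2 (proj2 (proj2_sig R1))) _ _ _ H1 b') as [y' Hy'].
        exists y', R1; auto.
      - intros b x y [R1 [C1 H1]] b'.
        destruct (proj2 (proj2 (proj2 (proj2_sig R1))) _ _ _ H1 b') as [y' Hy'].
        exists y', R1; auto. }
    exists (exist _ U HU). split.
    + intros R CR b x y H; simpl. exists R; auto.
    + intros u Hu b x y [R [CR H]]. apply (Hu R CR); auto.
Qed.

Lemma splitting_extend (R : bool -> K -> K -> Prop) (i : nat -> K) :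
  splitting R -> injective i -> (forall n, ~ has_children R (i n)) ->
  splitting (fun b x y => R b x y \/ exists n, x = i n /\ y = i (2 * n + Nat.b2n b)).
Proof.
  intros [Hfun [Hinj [Hd1 Hd2]]] Hi Hout.
  split; [|split; [|split]].
  - intros b x y y' [H1|[n [-> ->]]] [H2|[n' [E ->]]].
    + eauto.
    + exfalso. apply (Hout n'). rewrite <- E. eapply Hd1; eauto.
    + exfalso. apply (Hout n). eapply Hd1; eauto.
    + apply Hi in E. subst; auto.
  - intros b x b' x' y [H1|[n [-> ->]]] [H2|[n' [-> E]]].
    + eauto.
    + exfalso. apply (Hout (2 * n' + Nat.b2n b')). rewrite <- E. eapply Hd2; eauto.
    + exfalso. apply (Hout (2 * n + Nat.b2n b)). eapply Hd2; eauto.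
    + apply Hi in E. destruct b, b'; simpl in E; split; try f_equal; lia.
  - intros b x y [H1|[n [-> ->]]] b'.
    + destruct (Hd1 _ _ _ H1 b') as [y' Hy']. exists y'; left; auto.
    + exists (i (2 * n + Nat.b2n b')). right; eauto.
  - intros b x y [H1|[n [-> ->]]] b'.
    + destruct (Hd2 _ _ _ H1 b') as [y' Hy']. exists y'; left; auto.
    + exists (i (2 * (2 * n + Nat.b2n b) + Nat.b2n b')). right; eauto.
Qed.

(* By maximality, all but finitely many nodes of a maximal splitting have
   children: otherwise a sequence of childless nodes could be added. *)
Lemma cofinite_splitting : exists R, splitting R /\ exists l, forall x, ~ has_children R x -> In x l.
Proof.
  destruct (cpo_has_maximal _ splitting_cpo) as [[R HR] Hmax].
  exists R; split; [exact HR|].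
  apply NNPP; intro Hno.
  assert (Hfree : forall l, exists x, ~ has_children R x /\ ~ In x l).
  { intro l. apply NNPP; intro Hn. apply Hno. exists l. intros x Hx.
    apply NNPP; intro Hxl. apply Hn; eauto. }
  destruct (nat_embedding K _ Hfree) as [i [Hi Hout]].
  assert (E := Hmax (exist _ _ (splitting_extend R i HR Hi Hout)) (fun b x y H => or_introl H)).
  apply (f_equal (@proj1_sig _ _)) in E; simpl in E.
  apply (Hout 0). intro b. exists (i (2 * 0 + Nat.b2n b)).
  rewrite <- E. right; eauto.
Qed.

(* From a splitting whose childless nodes are finitely many, on an infinite K:
   send (b, x) to the true-child of the b-child of x when x has children, and
   the finitely many childless x to false-children of a sequence j of nodes. *)
Lemma splitting_injection (R : bool -> K -> K -> Prop) :
  splitting R -> (exists l, forall x, ~ has_children R x -> In x l) -> ~ finite_type K ->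
  exists psi : bool * K -> K, injective psi.
Proof.
  intros [_ [Hinj [_ Hkid]]] [l Hl] Hinf.
  assert (Hmany : forall l', exists x, has_children R x /\ ~ In x l').
  { intro l'. apply NNPP; intro Hn. apply Hinf, (list_cover_finite K (l' ++ l)).
    intro x. apply in_or_app. destruct (classic (has_children R x)) as [Hx|Hx]; [left|right; auto].
    apply NNPP; intro Hx'; apply Hn; eauto. }
  destruct (nat_embedding K _ Hmany) as [j [Hj Hjc]].
  pose (pos := fun x => epsilon (inhabits 0) (fun n => nth_error l n = Some x)).
  assert (Hpos : forall x, ~ has_children R x -> nth_error l (pos x) = Some x)
    by (intros x Hx; apply epsilon_spec, In_nth_error; auto).
  pose (child := fun b x => epsilon (inhabits x) (R b x)).
  assert (Hchild : forall b x, has_children R x -> R b x (child b x))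
    by (intros b x Hx; apply epsilon_spec, Hx).
  assert (Hchild_eq : forall b x b' x', has_children R x -> has_children R x' ->
                        child b x = child b' x' -> b = b' /\ x = x').
  { intros b x b' x' Hx Hx' E. apply (Hinj _ _ _ _ (child b' x')); [rewrite <- E|]; auto. }
  assert (Hgrand : forall b x, has_children R x -> has_children R (child b x)) by eauto.
  exists (fun p : bool * K => let (b, x) := p in
            if excluded_middle_informative (has_children R x) then child true (child b x)
            else child false (j (2 * pos x + Nat.b2n b))).
  intros [b x] [b' x'] E. cbv beta iota zeta in E.
  destruct (excluded_middle_informative (has_children R x)) as [Hx|Hx];
  destruct (excluded_middle_informative (has_children R x')) as [Hx'|Hx'];
  apply Hchild_eq in E; auto; destruct E as [Eb E]; try discriminate.
  - destruct (Hchild_eq _ _ _ _ Hx Hx' E) as [-> ->]; reflexivity.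
  - apply Hj in E.
    assert (Hb : b = b' /\ pos x = pos x') by (destruct b, b'; simpl in E; split; auto; lia).
    destruct Hb as [-> Hpx]. f_equal.
    assert (Ex := Hpos x Hx). rewrite Hpx, Hpos in Ex by exact Hx'. injection Ex; auto.
Qed.

Lemma infinite_double : ~ finite_type K -> exists psi : bool * K -> K, injective psi.
Proof.
  intro Hinf. destruct cofinite_splitting as [R [HR Hcof]].
  exact (splitting_injection R HR Hcof Hinf).
Qed.
End Splitting.

Lemma power_injection {T K : Type} (psi : T -> K) :
  injective psi -> exists e : (T -> bool) -> (K -> bool), injective e.
Proof.
  intro Hpsi.
  exists (fun F x => if excluded_middle_informative (exists t, psi t = x /\ F t = true) then true else false).
  intros F F' E. apply functional_extensionality; intro t.
  pose proof (f_equal (fun G => G (psi t)) E) as Et. cbv beta in Et.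
  destruct (excluded_middle_informative (exists t', psi t' = psi t /\ F t' = true)) as [[t1 [E1 F1]]|N1];
  destruct (excluded_middle_informative (exists t', psi t' = psi t /\ F' t' = true)) as [[t2 [E2 F2]]|N2];
    try discriminate.
  - apply Hpsi in E1; apply Hpsi in E2; subst; congruence.
  - destruct (F t) eqn:Ft; [exfalso; eauto|]. destruct (F' t) eqn:F't; [exfalso; eauto | reflexivity].
Qed.

Lemma injection_of_surjection {T B : Type} (s : T -> B) :
  (forall y, exists t, s t = y) -> exists e : B -> T, injective e.
Proof.
  intro Hs. exists (fun y => proj1_sig (constructive_indefinite_description _ (Hs y))).
  intros y y' E.
  pose proof (proj2_sig (constructive_indefinite_description _ (Hs y))) as Hy.
  pose proof (proj2_sig (constructive_indefinite_description _ (Hs y'))) as Hy'.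
  simpl in *. rewrite E in Hy. congruence.
Qed.

Lemma has_card_list (K : Type) n : has_card K n -> exists l : list K, forall k, In k l.
Proof.
  intros [e [He _]].
  exists (flat_map (fun m => match excluded_middle_informative (exists k, proj1_sig (e k) = m) with
                             | left H => proj1_sig (constructive_indefinite_description _ H) :: nil
                             | right _ => nil end) (seq 0 n)).
  intro k. apply in_flat_map. exists (proj1_sig (e k)). split.
  - apply in_seq. pose proof (proj2_sig (e k)); simpl in *; lia.
  - destruct (excluded_middle_informative _) as [H|H]; [left | exfalso; eauto].
    pose proof (proj2_sig (constructive_indefinite_description _ H)) as E. simpl in E.
    apply He, sig_ext, E.
Qed.

Lemma option_pairs_code (K : Type) (n : nat) :
  has_card K n -> exists c : option (bool * K) -> {m | m < 2 * n + 1}, injective c.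
Proof.
  intros [e [He _]].
  pose (code := fun t : option (bool * K) =>
          match t with None => 0 | Some (b, k) => 1 + 2 * proj1_sig (e k) + Nat.b2n b end).
  assert (Hcode : forall t, code t < 2 * n + 1).
  { intros [[b k]|]; simpl; [pose proof (proj2_sig (e k)); destruct b; simpl in *|]; lia. }
  exists (fun t => exist _ (code t) (Hcode t)).
  intros t t' E. apply (f_equal (@proj1_sig _ _)) in E. simpl in E.
  destruct t as [[b k]|], t' as [[b' k']|]; simpl in E; try lia; [|reflexivity].
  assert (Hb : b = b' /\ proj1_sig (e k) = proj1_sig (e k')) by (destruct b, b'; simpl in E; split; auto; lia).
  destruct Hb as [-> Hk]. apply sig_ext, He in Hk. subst; reflexivity.
Qed.

Theorem mainTheorem3
  (K : Type)                                  (* kappa, as a set of that cardinality *)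
  (I : Type) (lt : I -> I -> Prop)            (* an initial segment of Ord *)
  (Hwo : well_order lt)
  (A : I -> cpo) (f : forall a b, A a -> A b) (* f a b meaningful for a <= b *)
  (Hf_map : forall a b, wle lt a b -> is_cpo_map (f a b))
  (Hf_comp : forall a b c, wle lt a b -> wle lt b c ->
               forall x, f b c (f a b x) = f a c x)
  (Hf_id : forall a x, f a a x = x)
  (H0 : forall z, (forall a, wle lt z a) ->
          exists inj : K -> three -> A z, is_coproduct (fun _ : K => three) (A z) inj)
  (Hsucc : forall a b, is_succ lt a b ->
          exists u v : two -> A a, is_cpo_map u /\ is_cpo_map v /\ is_coequalizer u v (f a b))
  (Hlim : forall a, is_limit lt a -> is_colimit_below lt A f a) :
  forall a : I,
    (~ finite_type K -> exists e : A a -> (K -> bool), injective e) /\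
    (forall n, has_card K n -> exists e : A a -> {m : nat | m < 2 * n + 1}, injective e).
Proof.
  intro a.
  destruct (least_element lt Hwo a) as [z Hz].
  destruct (H0 z Hz) as [inj Hinj].
  pose (g := fun k i => f z a (inj k i)).
  assert (Hgen : generates (A a) (fun y => exists k i, y = g k i))
    by exact (tower_generated K I lt A f Hwo Hf_map Hf_comp Hf_id Hsucc Hlim z inj Hz Hinj a).
  assert (Hbot : forall k, is_bottom (A a) (g k zero3)).
  { intro k. apply (cpo_map_bottom three); [|exact zero3_bottom].
    apply (cpo_map_comp three (A z) (A a) (inj k) (f z a)); [apply (proj1 Hinj) | apply Hf_map, Hz]. }
  split.
  - intro Hinf.
    destruct (generated_to_power K (A a) g Hbot Hgen) as [e1 He1].
    destruct (infinite_double K Hinf) as [psi Hpsi].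
    destruct (power_injection psi Hpsi) as [e2 He2].
    exists (fun y => e2 (e1 y)). intros y y' E. auto.
  - intros n Hn.
    destruct (generated_enumeration K (A a) g Hbot Hgen (has_card_list K n Hn)) as [s Hs].
    destruct (injection_of_surjection s Hs) as [e1 He1].
    destruct (option_pairs_code K n Hn) as [c Hc].
    exists (fun y => c (e1 y)). intros y y' E. auto.
Qed.
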